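(* Let $B>0$ and $L\ge2$. For every $f\in\mathcal{D}(B,L)$ and all $x,y\in\mathbb{R}^p$, $|f(x)-f(y)|\le\frac B4\|x-y\|_2$ and $|f(x)-f(y)|\le2$.
   Context: $\mathcal{D}(B,L)$ is the class of networks $f:\mathbb{R}^p\to\mathbb{R}$ defined as follows: first-layer nodes are $x\mapsto\sigma(w^Tx+b)$ with $\sigma(u)=1/(1+e^{-u})$, $w\in\mathbb{R}^p$, $\|w\|_2\le B$, $b\in\mathbb{R}$; for $1\le l<L-1$, a node of layer $l+1$ is $x\mapsto\max\big(\sum_{i=1}^{d^{(l)}}w_if^{(l)}_i(x),0\big)$ with $f_i^{(l)}$ nodes of layer $l$, finite width $d^{(l)}$, and $\sum_i|w_i|\le1$; the output is $f(x)=\sum_{i=1}^{d^{(L-1)}}w_if_i^{(L-1)}(x)$ with $\sum_i|w_i|\le1$. *)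

From HB Require Import structures.
From mathcomp Require Import all_boot all_order all_algebra.
From mathcomp Require Import all_classical all_reals all_analysis.
Set Implicit Arguments. Unset Strict Implicit. Unset Printing Implicit Defensive.
Import Order.TTheory GRing.Theory Num.Theory.
Local Open Scope ring_scope.

Section Defs.
Variables (R : realType) (p : nat).

Definition sigmoid (u : R) : R := 1 / (1 + expR (- u)).

Definition dotv (w x : 'rV[R]_p) : R := \sum_(i < p) w 0 i * x 0 i.

Definition norm2 (x : 'rV[R]_p) : R := Num.sqrt (\sum_(i < p) x 0 i ^+ 2).

(* is_layer B l d F : F is the family of the d nodes of layer l of a network
   in D(B, _) (layers counted from 1). *)
Inductive is_layer (B : R) : nat -> forall d : nat, ('I_d -> 'rV[R]_p -> R) -> Prop :=
| layer_first (d : nat) (W : 'I_d -> 'rV[R]_p) (b : 'I_d -> R) :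
    (forall i, norm2 (W i) <= B) ->
    is_layer B 1 (fun i x => sigmoid (dotv (W i) x + b i))
| layer_next (l d d' : nat) (F : 'I_d -> 'rV[R]_p -> R) (V : 'I_d' -> 'I_d -> R) :
    is_layer B l F ->
    (forall j, \sum_(i < d) `|V j i| <= 1) ->
    is_layer B l.+1 (fun j x => Num.max (\sum_(i < d) V j i * F i x) 0).

Definition inD (B : R) (L : nat) (f : 'rV[R]_p -> R) : Prop :=
  exists (d : nat) (F : 'I_d -> 'rV[R]_p -> R) (w : 'I_d -> R),
    is_layer B L.-1 F /\ \sum_(i < d) `|w i| <= 1 /\
    f = (fun x => \sum_(i < d) w i * F i x).

End Defs.

From HB Require Import structures.
From mathcomp Require Import all_boot all_order all_algebra.
From mathcomp Require Import all_classical all_reals all_analysis.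
From mathcomp Require Import ring lra.
Import Order.TTheory GRing.Theory Num.Theory.
Local Open Scope ring_scope.

(* The sigmoid takes values in [0, 1] and, its derivative s (1 - s) being at
   most 1/4, is 1/4-Lipschitz; with Cauchy-Schwarz and |w| <= B every
   first-layer node is (B/4)-Lipschitz.  ReLU is 1-Lipschitz, and a
   combination with l1-norm at most 1 preserves both a Lipschitz bound and
   the range [0, 1], so by induction every node of every layer is
   (B/4)-Lipschitz with values in [0, 1].  Hence so is the output, whose
   oscillation is even at most 1. *)

Section BoundedDerivative.
Context {R : realType}.

Lemma bounded_derive_lipschitz (f df : R -> R) (k : R) :
  (forall x : R, is_derive x 1 f (df x)) -> (forall x, `|df x| <= k) ->
  forall a b, `|f a - f b| <= k * `|a - b|.
Proof.
move=> f_df df_le_k.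
suff le_ab a b : a <= b -> `|f a - f b| <= k * `|a - b|.
  move=> a b; case: (leP a b) => [/le_ab//|/ltW/le_ab].
  by rewrite (distrC (f b)) (distrC b).
move=> ab; rewrite distrC (distrC a).
have [c _ ->] : exists2 c, c \in `[a, b]%R & f b - f a = df c * (b - a).
  apply: MVT_segment => //.
  by apply: derivable_within_continuous => x _; case: (f_df x).
by rewrite normrM ler_wpM2r.
Qed.

End BoundedDerivative.

Section Sigmoid.
Context {R : realType}.
Implicit Types u a b : R.

Lemma sigmoidE u : sigmoid u = (1 + expR (- u))^-1.
Proof. by rewrite /sigmoid div1r. Qed.

Lemma sigmoid_itv u : 0 <= sigmoid u <= 1.
Proof.
rewrite sigmoidE; have e_gt0 := expR_gt0 (- u).
by rewrite invr_ge0 invf_le1 ?lerDl ?ltW ?addr_gt0 ?andbb.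
Qed.

Lemma is_derive_sigmoid u :
  is_derive u 1 (@sigmoid R) (sigmoid u * (1 - sigmoid u)).
Proof.
have e_gt0 := expR_gt0 (- u).
have d_exp : is_derive u 1 (expR \o -%R) (expR (- u) * -1).
  exact: is_derive1_comp.
have d_den : is_derive u 1 (fun v : R => 1 + expR (- v)) (- expR (- u)).
  by have := is_deriveD (is_derive_cst (1 : R) u 1) d_exp; rewrite add0r mulrN1.
have den_neq0 : 1 + expR (- u) != 0 by rewrite gt_eqF ?addr_gt0.
have := is_deriveV (f := fun v => 1 + expR (- v)) den_neq0 d_den.
have -> : (fun v => (1 + expR (- v))^-1) = @sigmoid R.
  by apply/funext => v; rewrite sigmoidE.
move/is_derive_eq; apply.
rewrite sigmoidE scaleNr scalerN opprK [_ *: _]mulrC.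
by field.
Qed.

Lemma sigmoid_lipschitz a b : `|sigmoid a - sigmoid b| <= 4^-1 * `|a - b|.
Proof.
apply: bounded_derive_lipschitz (@is_derive_sigmoid) _ a b => u.
have /andP[s_ge0 s_le1] := sigmoid_itv u.
rewrite ger0_norm ?mulr_ge0 ?subr_ge0 //.
by have := sqr_ge0 (sigmoid u - 2^-1); rewrite sqrrB; lra.
Qed.

End Sigmoid.

Section RealInequalities.
Context {R : realDomainType}.
Implicit Types (n : nat) (K s t : R).

Lemma lagrange_identity n (a b : 'I_n -> R) :
  \sum_i \sum_j (a i * b j - a j * b i) ^+ 2 =
  ((\sum_i a i ^+ 2) * (\sum_i b i ^+ 2) - (\sum_i a i * b i) ^+ 2) *+ 2.
Proof.
have sum_sqr_ab : \sum_i \sum_j (a i * b j) ^+ 2 = (\sum_i a i ^+ 2) * (\sum_i b i ^+ 2).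
  rewrite big_distrl; apply: eq_bigr => i _.
  by rewrite big_distrr; apply: eq_bigr => j _; rewrite exprMn.
have sq_dot : (\sum_i a i * b i) ^+ 2 = \sum_i \sum_j (a i * b j) * (a j * b i).
  rewrite expr2 big_distrl; apply: eq_bigr => i _.
  by rewrite big_distrr /=; apply: eq_bigr => j _; ring.
have sum_sqr_ba : \sum_i \sum_j (a j * b i) ^+ 2 = (\sum_i a i ^+ 2) * (\sum_i b i ^+ 2).
  by rewrite exchange_big.
under eq_bigr do under eq_bigr do rewrite sqrrB.
under eq_bigr do rewrite big_split sumrB sumrMnl.
rewrite big_split sumrB sumrMnl sum_sqr_ab sum_sqr_ba sq_dot.
rewrite /=; ring.
Qed.

Lemma cauchy_schwarz n (a b : 'I_n -> R) :
  (\sum_i a i * b i) ^+ 2 <= (\sum_i a i ^+ 2) * (\sum_i b i ^+ 2).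
Proof.
have : 0 <= \sum_i \sum_j (a i * b j - a j * b i) ^+ 2.
  by do 2![apply: sumr_ge0 => ? _]; exact: sqr_ge0.
by rewrite lagrange_identity pmulrn_lge0 // subr_ge0.
Qed.

Lemma ler_norm_wsum n (V g : 'I_n -> R) K :
  0 <= K -> \sum_i `|V i| <= 1 -> (forall i, `|g i| <= K) ->
  `|\sum_i V i * g i| <= K.
Proof.
move=> K_ge0 V_le1 g_leK.
apply: le_trans (ler_norm_sum _ _ _) _.
apply: (@le_trans _ _ (\sum_i `|V i| * K)).
  by apply: ler_sum => i _; rewrite normrM ler_wpM2l.
by rewrite -mulr_suml ler_piMl.
Qed.

Lemma ler_dist_wsum n (V g h : 'I_n -> R) K :
  0 <= K -> \sum_i `|V i| <= 1 -> (forall i, `|g i - h i| <= K) ->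
  `|\sum_i V i * g i - \sum_i V i * h i| <= K.
Proof.
move=> K_ge0 V_le1 gh_leK; rewrite -sumrB.
under eq_bigr do rewrite -mulrBr.
exact: ler_norm_wsum.
Qed.

Lemma ler_dist_max0 s t : `|Num.max s 0 - Num.max t 0| <= `|s - t|.
Proof.
rewrite /Num.max; case: ltrP => s0; case: ltrP => t0 //.
- by rewrite subrr normr0.
- by rewrite sub0r normrN distrC !ger0_norm; lra.
- by rewrite subr0 !ger0_norm; lra.
Qed.

Lemma ler_dist01 s t : 0 <= s <= 1 -> 0 <= t <= 1 -> `|s - t| <= 1.
Proof. by move=> /andP[? ?] /andP[? ?]; rewrite ler_norml; apply/andP; split; lra. Qed.

End RealInequalities.

Section Network.
Context {R : realType} {p : nat}.
Implicit Types (B : R) (w x y : 'rV[R]_p).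

Lemma dotvBr w x y : dotv w x - dotv w y = dotv w (x - y).
Proof. by rewrite /dotv -sumrB; apply: eq_bigr => i _; rewrite !mxE mulrBr. Qed.

Lemma norm2_ge0 x : 0 <= norm2 x.
Proof. exact: sqrtr_ge0. Qed.

Lemma norm_dotv_le w x : `|dotv w x| <= norm2 w * norm2 x.
Proof.
rewrite /dotv /norm2 -sqrtrM; last by apply: sumr_ge0 => i _; exact: sqr_ge0.
by rewrite -sqrtr_sqr ler_wsqrtr // cauchy_schwarz.
Qed.

Lemma is_layer_itv B l d (F : 'I_d -> 'rV[R]_p -> R) :
  is_layer B l F -> forall i x, 0 <= F i x <= 1.
Proof.
elim=> {l d F} [d W b _ | l d d' F V _ F_itv V_l1] i x; first exact: sigmoid_itv.
rewrite le_max lexx orbT ge_max ler01 andbT.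
apply: le_trans (ler_norm _) _; apply: ler_norm_wsum => // j.
by case/andP: (F_itv j x) => F_ge0 F_le1; rewrite ger0_norm.
Qed.

Lemma is_layer_lipschitz B l d (F : 'I_d -> 'rV[R]_p -> R) :
  0 <= B -> is_layer B l F ->
  forall i x y, `|F i x - F i y| <= B / 4 * norm2 (x - y).
Proof.
move=> B_ge0; elim=> {l d F} [d W b W_le | l d d' F V _ F_lip V_l1] i x y.
- apply: le_trans (sigmoid_lipschitz _ _) _.
  rewrite opprD addrACA subrr addr0 dotvBr mulrAC [leLHS]mulrC ler_wpM2r ?invr_ge0 //.
  apply: le_trans (norm_dotv_le _ _) _.
  by rewrite ler_wpM2r ?norm2_ge0.
- apply: le_trans (ler_dist_max0 _ _) _.
  by apply: ler_dist_wsum => //; rewrite mulr_ge0 ?divr_ge0 ?norm2_ge0.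
Qed.

End Network.

Theorem lemma1 (R : realType) (p : nat) (B : R) (L : nat) :
  0 < B -> (2 <= L)%N ->
  forall f : 'rV[R]_p -> R, inD B L f ->
  forall x y : 'rV[R]_p,
    `|f x - f y| <= B / 4 * norm2 (x - y) /\ `|f x - f y| <= 2.
Proof.
(* [is_layer] has no layer 0. *)
move=> /ltW B_ge0 _ f [d [F [w [F_layer [w_l1 ->]]]]] x y; split.
- apply: ler_dist_wsum => //; first by rewrite mulr_ge0 ?divr_ge0 ?norm2_ge0 ?ler0n.
  by move=> i; exact: is_layer_lipschitz B_ge0 F_layer i x y.
- apply: (@le_trans _ _ 1); last by rewrite ler1n.
  apply: ler_dist_wsum => // i.
  by apply: ler_dist01; exact: is_layer_itv F_layer i _.
Qed.
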